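(* Let $A,B\subset\mathbb{R}$ be sets of positive Lebesgue measure. Then $(A\times B)+S^1$ contains an annulus of radius $1$, i.e. a set of the form $\{x\in\mathbb{R}^2: 1-\varepsilon<|x-p|<1+\varepsilon\}$ for some $p\in\mathbb{R}^2$ and $\varepsilon>0$.
   Context: $S^1=\{x\in\mathbb{R}^2:|x|=1\}$ is the Euclidean unit circle and $X+Y=\{x+y:x\in X,y\in Y\}$. *)

From mathcomp Require Import all_boot all_order all_algebra.
From mathcomp Require Import all_classical all_reals all_analysis.
Import Order.TTheory GRing.Theory Num.Theory.
Local Open Scope classical_set_scope.
Local Open Scope ring_scope.

Definition eucl_norm {R : realType} (x : R * R) : R :=
  Num.sqrt (x.1 ^+ 2 + x.2 ^+ 2).

Definition circle1 {R : realType} : set (R * R) :=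
  [set x | eucl_norm x = 1].

Definition minkowski_sum2 {R : realType} (X Y : set (R * R)) : set (R * R) :=
  [set z | exists x y, X x /\ Y y /\ z = (x.1 + y.1, x.2 + y.2)].

Definition annulus1 {R : realType} (p : R * R) (eps : R) : set (R * R) :=
  [set x | 1 - eps < eucl_norm (x.1 - p.1, x.2 - p.2) < 1 + eps].

From mathcomp Require Import all_boot all_order all_algebra.
From mathcomp Require Import all_classical all_reals all_analysis.
From mathcomp Require Import ring lra.
Import Order.TTheory GRing.Theory Num.Theory.
Import numFieldNormedType.Exports.
Local Open Scope classical_set_scope.
Local Open Scope ring_scope.

(* Let a0 and b0 be density points of A and B and let d > 0 be small; the annulus
   centred at (a0, b0) of width d^2 works.  Given x in it, put v = x - (a0, b0) and
   assume |v1| <= |v2|.  Over an interval I of length d at distance between d and 2d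
   from a0, on the side opposite to v1, the unit circle around x is the graph of a
   function f with values near b0, and it is steep there: f expands distances by the
   factor d + |v1|.  Preimages under an expanding map have proportionally small outer
   measure, so by density of B at b0 the points s of I with f s outside B fill a small
   part of I, and by density of A at a0 so do the points outside A.  Hence some s in A
   has f s in B, and (s, f s) is a point of A x B on the unit circle around x. *)

Section expanding_preimage.
Context {R : realType}.
Local Notation mu := (@lebesgue_measure R).
Context {f : R -> R} {I : set R} {m : R}.
Hypotheses (m_gt0 : 0 < m)
  (f_expanding : forall s s', I s -> I s' -> m * `|s - s'| <= `|f s - f s'|).

Lemma lebesgue_measure_expanding_preimage_itv (a b : R) :
  (mu (I `&` f @^-1` `]a, b]) <= (2 / m)%:E * wlength idfun `]a, b])%E.
Proof.
have [[s0 [Is0 /=]]|] := pselect (exists s0, (I `&` f @^-1` `]a, b]) s0); last first.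
  move=> /forallNP I_f_empty; rewrite (_ : _ `&` _ = set0); last exact/seteqP.
  by rewrite measure0 mule_ge0 ?wlength_ge0 // lee_fin divr_ge0 // ltW.
rewrite in_itv /= => /andP[a_fs0 fs0_b].
pose D := (b - a) / m.
have D_gt0 : 0 < D by rewrite divr_gt0 // subr_gt0 (lt_le_trans a_fs0).
apply: (@le_trans _ _ (mu `]s0 - D, s0 + D]%classic)).
  apply: le_outer_measure.
  move=> s [Is]; rewrite /= !in_itv /= => /andP[a_fs fs_b].
  have : m * `|s - s0| < m * D.
    rewrite /D mulrCA divff ?gt_eqF // mulr1.
    apply: le_lt_trans (f_expanding _ _ Is Is0) _.
    by rewrite ltr_norml; apply/andP; split; lra.
  by rewrite ltr_pM2l // ltr_norml => /andP[? ?]; apply/andP; split; lra.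
rewrite lebesgue_measure_itv wlength_itv /= !lte_fin ifT; last lra.
rewrite ifT ?(lt_le_trans a_fs0) // -EFinM lee_fin.
have -> : s0 + D - (s0 - D) = 2 / m * (b - a) by rewrite /D; field; rewrite gt_eqF.
exact: lexx.
Qed.

Lemma lebesgue_measure_expanding_preimage (E : set R) :
  (mu (I `&` f @^-1` E) <= (2 / m)%:E * mu E)%E.
Proof.
(* mu is the outer measure induced by countable covers with half-open intervals. *)
rewrite -[2 / m]invf_div lee_pdivlMl ?divr_gt0 //.
apply/ereal_infP => _ [F [mF EF] <-].
rewrite -lee_pdivlMl ?divr_gt0 // invf_div -nneseriesZl; last first.
  by move=> i _; exact: wlength_ge0.
apply: (@le_trans _ _ (mu (\bigcup_i (I `&` f @^-1` F i)))).
  by apply: le_outer_measure => s [Is /EF[i _ Fi]]; exists i.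
apply: le_trans (outer_measure_sigma_subadditive mu _) _.
apply: lee_nneseries => [i _ _|i _]; first exact: outer_measure_ge0.
by case: (mF i) => -[a b] _ <-; exact: lebesgue_measure_expanding_preimage_itv.
Qed.

Lemma expanding_preimage_meets (A B E : set R) :
  (forall s, I s -> E (f s)) ->
  (mu (I `\` A) + (2 / m)%:E * mu (E `\` B) < mu I)%E ->
  exists s, [/\ I s, A s & B (f s)].
Proof.
move=> f_IE lt_I; apply: contrapT => no_hit.
have IA_sub : I `&` A `<=` I `&` f @^-1` (E `\` B).
  move=> s [Is As]; split=> //; split; first exact: f_IE.
  by move=> Bfs; apply: no_hit; exists s.
have cover_I := outer_measureU2 mu (I `&` A) (I `\` A); rewrite setUIDK in cover_I.
suff : (mu I < mu I)%E by rewrite ltxx.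
apply: le_lt_trans cover_I _; rewrite addeC; apply: le_lt_trans lt_I.
apply: leeD => //; apply: le_trans (le_outer_measure mu _ _ IA_sub) _.
exact: lebesgue_measure_expanding_preimage.
Qed.

End expanding_preimage.

Section density.
Context {R : realType}.
Local Notation mu := (@lebesgue_measure R).

Definition ball_defect_le (A : set R) (a0 eps rho : R) : Prop :=
  forall r, 0 < r <= rho -> (mu (ball a0 r `\` A) <= (eps * r)%:E)%E.

Lemma ball_defect_le_mono (A : set R) (a0 eps rho rho' : R) : rho' <= rho ->
  ball_defect_le A a0 eps rho -> ball_defect_le A a0 eps rho'.
Proof.
move=> le_rho dA r /andP[r_gt0 r_le]; apply: dA.
by rewrite r_gt0 (le_trans r_le).
Qed.

Lemma exists_ball_defect_le {A : set R} {eps : R} : measurable A ->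
  (0 < mu A)%E -> 0 < eps -> exists a0 rho, 0 < rho /\ ball_defect_le A a0 eps rho.
Proof.
move=> mA A_gt0 eps_gt0.
have [x x_dense] : exists x,
    (mu (A `&` ball x r) / mu (ball x r))%E @[r --> 0^'+] --> 1%:E.
  have [N [_ N0 undense_N]] := lebesgue_density mA.
  apply: contrapT => no_dense; move: A_gt0; rewrite ltNge => /negP; apply.
  rewrite -N0; apply: le_outer_measure => a Aa; apply: undense_N => a_dense.
  by apply: no_dense; exists a; rewrite /= indicE mem_set in a_dense.
(* A density ratio above 1 - eps/2 in a ball of measure 2r leaves at most eps r
   of it outside A. *)
have near1 : nbhs (1%:E : \bar R) [set y | ((1 - eps / 2)%:E < y)%E].
  apply: open_nbhs_nbhs; split; first exact: open_ereal_gt_ereal.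
  by rewrite /= lte_fin; lra.
have [e /= e_gt0 ratio_gt] := x_dense _ near1.
exists x, (e / 2); split; first lra.
move=> r /andP[r_gt0 r_le].
have /(ratio_gt r) /(_ r_gt0) : ball_ (fun y : R => `|y|) 0 e r.
  by rewrite /ball_ /= sub0r normrN gtr0_norm //; lra.
have ball_fin : (mu (ball x r) < +oo)%E.
  by rewrite lebesgue_measure_ball ?ltry // ltW.
have IA_fin : mu (A `&` ball x r) \is a fin_num.
  rewrite ge0_fin_numE ?measure_ge0 //.
  exact: le_lt_trans (le_outer_measure mu _ _ (@subIsetr _ A _)) ball_fin.
rewrite /= lebesgue_measure_ball ?(ltW r_gt0) // -(fineK IA_fin).
rewrite inver mulrn_eq0 /= gt_eqF // -EFinM lte_fin ltr_pdivlMr ?mulrn_wgt0 //.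
move=> lt_IA.
have -> : mu (ball x r `\` A) = (mu (ball x r) - mu (ball x r `&` A))%E.
  by rewrite measureD //; exact: measurable_realfun.measurable_ball.
rewrite setIC lebesgue_measure_ball ?(ltW r_gt0) // -(fineK IA_fin) -EFinB lee_fin.
by rewrite -mulr_natr; lra.
Qed.

End density.

Section circle_arithmetic.
Context {R : realType}.

Lemma sqrt1_expanding (m w w' : R) : w ^+ 2 <= 1 -> w' ^+ 2 <= 1 ->
  2 * m <= w + w' ->
  m * `|w - w'| <= `|Num.sqrt (1 - w ^+ 2) - Num.sqrt (1 - w' ^+ 2)|.
Proof.
move=> w_le1 w'_le1 m_le.
set h := Num.sqrt _; set h' := Num.sqrt _.
have hE : h ^+ 2 = 1 - w ^+ 2 by rewrite sqr_sqrtr // subr_ge0.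
have h'E : h' ^+ 2 = 1 - w' ^+ 2 by rewrite sqr_sqrtr // subr_ge0.
have [h_ge0 h'_ge0] : 0 <= h /\ 0 <= h' by split; apply: sqrtr_ge0.
have hh'_le2 : h + h' <= 2.
  have sqrt_le1 x : Num.sqrt (1 - x ^+ 2) <= 1 :> R.
    by rewrite -[leRHS]sqrtr1 ler_wsqrtr // lerBlDr lerDl sqr_ge0.
  by rewrite -[2]/(1 + 1) lerD ?sqrt_le1.
have [m_le0|m_gt0] := lerP m 0.
  by rewrite (le_trans _ (normr_ge0 _)) // mulr_le0_ge0.
have key : `|h - h'| * (h + h') = `|w - w'| * (w + w').
  rewrite -[h + h']ger0_norm ?addr_ge0 // -[w + w']ger0_norm; last lra.
  rewrite -!normrM -normrN; congr `|_|.
  by transitivity (h' ^+ 2 - h ^+ 2); [ring | rewrite hE h'E; ring].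
have := normr_ge0 (h - h'); have := normr_ge0 (w - w'); nra.
Qed.

Lemma sqrt1_near (V w t d : R) : 1 / 2 < V -> 0 < d -> 0 <= t ->
  d + t <= w <= 2 * d + t -> w ^+ 2 <= 1 -> `|t ^+ 2 + V ^+ 2 - 1| < 3 * d ^+ 2 ->
  `|V - Num.sqrt (1 - w ^+ 2)| < 16 * d ^+ 2 + 8 * d * t.
Proof.
move=> V_gt d_gt0 t_ge0 /andP[w_ge w_le] w_le1.
set h := Num.sqrt _.
have hE : h ^+ 2 = 1 - w ^+ 2 by rewrite sqr_sqrtr // subr_ge0.
have h_ge0 : 0 <= h := sqrtr_ge0 _.
have ww_ge0 : 0 <= w ^+ 2 - t ^+ 2 by nra.
have ww_le : w ^+ 2 - t ^+ 2 <= 4 * d ^+ 2 + 4 * d * t by nra.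
have dd_gt0 : 0 < d ^+ 2 by rewrite exprn_gt0.
have dt_ge0 : 0 <= d * t by rewrite mulr_ge0 // ltW.
have diffE : (V - h) * (V + h) = t ^+ 2 + V ^+ 2 - 1 + (w ^+ 2 - t ^+ 2) by nra.
rewrite !ltr_norml => /andP[lo hi]; apply/andP; split; nra.
Qed.

End circle_arithmetic.

Section circle_through_product.
Context {R : realType}.
Local Notation mu := (@lebesgue_measure R).
Context {A B : set R} {a0 b0 d v1 v2 tau sig : R}.
Hypotheses (d_gt0 : 0 < d) (d_small : d <= 1 / 32)
  (dA : ball_defect_le A a0 (1 / 50) (32 * d))
  (dB : ball_defect_le B b0 (1 / 50) (32 * d))
  (v12 : `|v1| <= `|v2|)
  (v_lo : (1 - d ^+ 2) ^+ 2 < v1 ^+ 2 + v2 ^+ 2)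
  (v_hi : v1 ^+ 2 + v2 ^+ 2 < (1 + d ^+ 2) ^+ 2)
  (tau_sign : tau = 1 \/ tau = -1) (tau_v1 : tau * v1 = - `|v1|)
  (sig_sign : sig = 1 \/ sig = -1) (sig_v2 : sig * v2 = `|v2|).

Let t : R := `|v1|.
Let V : R := `|v2|.

Let t_ge0 : 0 <= t. Proof. exact: normr_ge0. Qed.

Let d_sqr_small : 0 < d ^+ 2 <= 1 / 1024.
Proof.
rewrite exprn_gt0 //= expr2.
by have := ler_pM (ltW d_gt0) (ltW d_gt0) d_small d_small; lra.
Qed.

Let tV_near1 : `|t ^+ 2 + V ^+ 2 - 1| < 3 * d ^+ 2.
Proof.
move: v_lo v_hi; rewrite -[v1 ^+ 2]real_normK ?num_real //.
rewrite -[v2 ^+ 2]real_normK ?num_real // /t /V.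
move: d_sqr_small; set D := d ^+ 2 => /andP[D_gt0 D_le] lo hi.
have D2_ge0 : 0 <= D * D by rewrite mulr_ge0 // ltW.
have D2_le : D * D <= D by rewrite ler_piMl // ?ltW //; lra.
rewrite ltr_norml; apply/andP; split.
  have sqrE : (1 - D) ^+ 2 = 1 - 2 * D + D * D by ring.
  lra.
have sqrE : (1 + D) ^+ 2 = 1 + 2 * D + D * D by ring.
lra.
Qed.

Let tV_sqr : t ^+ 2 <= V ^+ 2.
Proof. by rewrite !expr2 ler_pM ?normr_ge0. Qed.

Let t_lt : t < 3 / 4.
Proof.
move: tV_sqr tV_near1 d_sqr_small; rewrite ltr_norml !expr2.
by move=> ? /andP[_ ?] /andP[_ ?]; nra.
Qed.

Let V_gt : 1 / 2 < V.
Proof.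
have V_ge0 : 0 <= V := normr_ge0 _.
move: tV_sqr tV_near1 d_sqr_small; rewrite ltr_norml !expr2.
by move=> ? /andP[? _] /andP[_ ?]; nra.
Qed.

(* I is [a0 + d, a0 + 2d] if tau = 1 and [a0 - 2d, a0 - d] if tau = -1. *)
Let c := a0 + tau * (3 * d / 2) - d / 2.
Let I : set R := `[c, c + d].
Let W s := tau * (s - a0) + t.
Let f s := b0 + v2 - sig * Num.sqrt (1 - W s ^+ 2).

Let tau_I s : I s -> d <= tau * (s - a0) <= 2 * d.
Proof.
rewrite /I /c /= in_itv /=.
by case: tau_sign => -> /andP[? ?]; apply/andP; split; lra.
Qed.

Let tau_norm : `|tau| = 1.
Proof. by case: tau_sign => ->; rewrite ?normrN normr1. Qed.

Let sig_norm : `|sig| = 1.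
Proof. by case: sig_sign => ->; rewrite ?normrN normr1. Qed.

Let W_I s : I s -> d + t <= W s <= 2 * d + t.
Proof. by move/tau_I; rewrite /W => /andP[? ?]; apply/andP; split; lra. Qed.

Let W_sqr_le1 s : I s -> W s ^+ 2 <= 1.
Proof.
move/W_I => /andP[? ?]; have := t_lt; have := t_ge0; have := d_small => ? ? ?.
have W_ge0 : 0 <= W s by lra.
have W_le1 : W s <= 1 by lra.
by rewrite -[1]mulr1 expr2 ler_pM.
Qed.

Let f_expanding s s' : I s -> I s' -> (d + t) * `|s - s'| <= `|f s - f s'|.
Proof.
move=> Is Is'.
have -> : f s - f s' =
    sig * (Num.sqrt (1 - W s' ^+ 2) - Num.sqrt (1 - W s ^+ 2)) by rewrite /f; ring.
have -> : s - s' = tau * (W s - W s') by rewrite /W; case: tau_sign => ->; ring.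
rewrite !normrM tau_norm sig_norm !mul1r distrC.
apply: sqrt1_expanding; rewrite ?W_sqr_le1 //.
by move: (W_I _ Is) (W_I _ Is') => /andP[? _] /andP[? _]; lra.
Qed.

Let f_near s : I s -> ball b0 (16 * d ^+ 2 + 8 * d * t) (f s).
Proof.
move=> Is; have v2E : v2 = sig * V by rewrite /V -sig_v2; case: sig_sign => ->; ring.
rewrite /ball /=.
have -> : b0 - f s = sig * (Num.sqrt (1 - W s ^+ 2) - V) by rewrite /f v2E; ring.
rewrite normrM sig_norm mul1r distrC.
by apply: sqrt1_near; rewrite ?W_I ?W_sqr_le1.
Qed.

Let I_near : I `<=` ball a0 (3 * d).
Proof.
move=> s /tau_I /andP[? ?]; rewrite /ball /= distrC.
have -> : `|s - a0| = `|tau * (s - a0)| by rewrite normrM tau_norm mul1r.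
by have := d_gt0; rewrite ger0_norm; lra.
Qed.

Let f_on_circle s : I s -> (s - a0 - v1) ^+ 2 + (f s - b0 - v2) ^+ 2 = 1.
Proof.
move=> Is; have v1E : v1 = - (tau * t).
  by rewrite /t -mulrN -tau_v1; case: tau_sign => ->; ring.
have hE : Num.sqrt (1 - W s ^+ 2) ^+ 2 = 1 - W s ^+ 2.
  by rewrite sqr_sqrtr // subr_ge0 W_sqr_le1.
transitivity (tau ^+ 2 * W s ^+ 2 + sig ^+ 2 * Num.sqrt (1 - W s ^+ 2) ^+ 2).
  by rewrite /f v1E /W; case: tau_sign => ->; ring.
by rewrite hE; case: tau_sign => ->; case: sig_sign => ->; ring.
Qed.

Lemma circle_meets_product_signed :
  exists a b, [/\ A a, B b & (a - a0 - v1) ^+ 2 + (b - b0 - v2) ^+ 2 = 1].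
Proof.
move: (d_gt0) (d_small) (t_ge0) (t_lt) => d_pos d_le t_pos t_le.
have dt_ge0 : 0 <= d * t by rewrite mulr_ge0 // ltW.
pose rb := 16 * d ^+ 2 + 8 * d * t.
have m_gt0 : 0 < d + t by lra.
have rb_gt0 : 0 < rb by have := d_sqr_small; rewrite /rb; lra.
have rb_le : rb <= 32 * d by rewrite /rb expr2; nra.
have IA_le : (mu (I `\` A) <= (1 / 50 * (3 * d))%:E)%E.
  apply: (@le_trans _ _ (mu (ball a0 (3 * d) `\` A))).
    by apply: le_outer_measure; exact: setSD.
  by apply: dA; apply/andP; split; lra.
have Bfar_le : (mu (ball b0 rb `\` B) <= (1 / 50 * rb)%:E)%E.
  by apply: dB; rewrite rb_gt0.
have rb_div : rb / (d + t) <= 16 * d by rewrite ler_pdivrMr // /rb expr2; nra.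
(* The two defects are at most 3d/50 and 32d/50, which sum to less than |I| = d. *)
have [s [Is As Bfs]] : exists s, [/\ I s, A s & B (f s)].
  apply: (expanding_preimage_meets m_gt0 f_expanding _ _ _ f_near).
  rewrite /I lebesgue_measure_itv /= lte_fin ltrDl d_gt0 -EFinB [c + d - c]addrC addKr.
  apply: le_lt_trans (leeD IA_le (lee_wpmul2l _ Bfar_le)) _.
    by rewrite lee_fin divr_ge0 // ltW.
  rewrite -EFinM -EFinD lte_fin.
  have -> : 2 / (d + t) * (1 / 50 * rb) = rb / (d + t) / 25 by field; lra.
  lra.
by exists s, (f s); split => //; apply: f_on_circle.
Qed.

End circle_through_product.

Section annulus.
Context {R : realType}.

Lemma exists_sign (x : R) : exists2 e : R, e = 1 \/ e = -1 & e * x = `|x|.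
Proof.
have [x_ge0|x_lt0] := lerP 0 x.
  by exists 1; [left | rewrite mul1r ger0_norm].
by exists (-1); [right | rewrite mulN1r ltr0_norm].
Qed.

Lemma circle_meets_product {A B : set R} {a0 b0 d v1 v2 : R} :
  0 < d -> d <= 1 / 32 ->
  ball_defect_le A a0 (1 / 50) (32 * d) -> ball_defect_le B b0 (1 / 50) (32 * d) ->
  (1 - d ^+ 2) ^+ 2 < v1 ^+ 2 + v2 ^+ 2 -> v1 ^+ 2 + v2 ^+ 2 < (1 + d ^+ 2) ^+ 2 ->
  exists a b, [/\ A a, B b & (a - a0 - v1) ^+ 2 + (b - b0 - v2) ^+ 2 = 1].
Proof.
move=> d_gt0 d_small.
wlog v12 : A B a0 b0 v1 v2 / `|v1| <= `|v2| => [wlog_v12 dA dB v_lo v_hi|].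
  have [v12|/ltW v21] := lerP `|v1| `|v2|; first exact: wlog_v12.
  rewrite [v1 ^+ 2 + _]addrC in v_lo v_hi.
  have [b [a [Bb Aa on_circle]]] := wlog_v12 B A b0 a0 v2 v1 v21 dB dA v_lo v_hi.
  by exists a, b; split => //; rewrite addrC.
move=> dA dB v_lo v_hi.
have [tau tau_sign tauE] := exists_sign (- v1).
have [sig sig_sign sigE] := exists_sign v2.
apply: (circle_meets_product_signed d_gt0 d_small dA dB v12 v_lo v_hi tau_sign _
  sig_sign sigE).
by rewrite -normrN -tauE mulrN opprK.
Qed.

Lemma annulus1_sqr {p x : R * R} {e : R} : 0 <= e <= 1 -> annulus1 p e x ->
  (1 - e) ^+ 2 < (x.1 - p.1) ^+ 2 + (x.2 - p.2) ^+ 2 < (1 + e) ^+ 2.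
Proof.
rewrite /annulus1 /eucl_norm /= => /andP[e_ge0 e_le1].
set q := (x.1 - p.1) ^+ 2 + _; have q_ge0 : 0 <= q by rewrite addr_ge0 ?sqr_ge0.
have s_ge0 := sqrtr_ge0 q.
move=> /andP[lo hi]; rewrite -(sqr_sqrtr q_ge0) !expr2.
by apply/andP; split; nra.
Qed.

Lemma annulus1_sub_minkowski (A B : set R) (a0 b0 d : R) :
  0 < d -> d <= 1 / 32 ->
  ball_defect_le A a0 (1 / 50) (32 * d) -> ball_defect_le B b0 (1 / 50) (32 * d) ->
  annulus1 (a0, b0) (d ^+ 2) `<=` minkowski_sum2 (A `*` B) circle1.
Proof.
move=> d_gt0 d_small dA dB [x1 x2] x_annulus.
have dd_le1 : 0 <= d ^+ 2 <= 1 by rewrite sqr_ge0 expr2 /=; nra.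
have /andP[v_lo v_hi] := annulus1_sqr dd_le1 x_annulus.
have [a [b [Aa Bb on_circle]]] := circle_meets_product d_gt0 d_small dA dB v_lo v_hi.
exists (a, b), (x1 - a, x2 - b); split => //; split; last by rewrite /= !subrKC.
rewrite /circle1 /eucl_norm /=.
have -> : (x1 - a) ^+ 2 + (x2 - b) ^+ 2 = 1 by rewrite -on_circle /=; ring.
exact: sqrtr1.
Qed.

End annulus.

Theorem mainTheorem3 (R : realType) (A B : set R) :
  measurable A -> measurable B ->
  (0 < (@lebesgue_measure R) A)%E -> (0 < (@lebesgue_measure R) B)%E ->
  exists (p : R * R) (eps : R), 0 < eps /\
    annulus1 p eps `<=` minkowski_sum2 (setX A B) circle1.
Proof.
move=> mA mB A_gt0 B_gt0.
have eps_gt0 : 0 < 1 / 50 :> R by [].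
have [a0 [rA [rA_gt0 dA]]] := exists_ball_defect_le mA A_gt0 eps_gt0.
have [b0 [rB [rB_gt0 dB]]] := exists_ball_defect_le mB B_gt0 eps_gt0.
pose d := Num.min (Num.min rA rB) 1 / 32.
have d_gt0 : 0 < d by rewrite divr_gt0 // !lt_min rA_gt0 rB_gt0 ltr01.
have d32E : 32 * d = Num.min (Num.min rA rB) 1 by rewrite mulrC divfK.
exists (a0, b0), (d ^+ 2); split; first exact: exprn_gt0.
apply: annulus1_sub_minkowski => //.
- by rewrite ler_pM2r // ge_min lexx orbT.
- by apply: ball_defect_le_mono dA; rewrite d32E !ge_min lexx.
- by apply: ball_defect_le_mono dB; rewrite d32E !ge_min lexx !orbT.
Qed.
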